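(* Let $\mathfrak S=(\mathcal S,\mathcal U,T_{\mathfrak s})$ be a controlled Markov process, $\mathcal P=\langle B_1,\dots,B_\ell\rangle$ a partition of $\mathcal S$ into measurable sets, $s^0\in\mathcal S$ an initial state and $\rho$ a stationary control policy. Suppose that for every finite path $(s^0,\dots,s^n)\in\mathcal S^{n+1}$ of $\mathfrak S$ starting at $s^0$ and every odd $i\in\{1,\dots,\ell\}$, $$s^n\in B_i\implies P_{s^n}^{\rho}\Big(\mathfrak S\models\lozenge\big(\square\neg B_i\vee\textstyle\bigvee_{j\text{ even},\,j\in\{i+1,\dots,\ell\}}B_j\big)\Big)=1.$$ Then $P_{s^0}^{\rho}(\mathfrak S\models\mathit{Parity}(\mathcal P))=1$.
   Context: CMP: $\mathfrak S=(\mathcal S,\mathcal U,T_{\mathfrak s})$ with $\mathcal S$ a Borel space, $\mathcal U$ a finite input set, $T_{\mathfrak s}(\cdot\mid s,u)$ a probability measure on the Borel sets of $\mathcal S$. A stationary policy is a universally measurable $\rho:\mathcal S\to\mathcal U$; $P_s^\rho$ is the induced probability measure on infinite paths $(s^0,s^1,\dots)$ with $s^0=s$ and $s^{k+1}\sim T_{\mathfrak s}(\cdot\mid s^k,\rho(s^k))$. A finite path of length $n+1$ is any sequence $(s^0,\dots,s^n)$ of states. Temporal operators have LTL semantics on infinite paths: $\lozenge\phi$ means $\phi$ holds at some suffix; $\square\neg B_i$ means $B_i$ is never visited from that point on; a set $B_j$ as a formula holds at a position if the current state is in $B_j$. $\mathit{Parity}(\mathcal P)$ holds on a path iff for every odd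 $i$, if $B_i$ is visited infinitely often then $B_j$ is visited infinitely often for some even $j\in\{i+1,\dots,\ell\}$. *)

From HB Require Import structures.
From mathcomp Require Import all_boot all_order all_algebra.
From mathcomp Require Import all_classical all_reals all_analysis.
Set Implicit Arguments. Unset Strict Implicit. Unset Printing Implicit Defensive.
Import Order.TTheory GRing.Theory Num.Theory.
Local Open Scope classical_set_scope.
Local Open Scope ring_scope.
Local Open Scope ereal_scope.

Definition coord_cylinders d (S : measurableType d) : set (set (nat -> S)) :=
  [set C | exists k A, measurable A /\ C = (fun w : nat -> S => w k) @^-1` A].

Arguments coord_cylinders {d} S.

Definition paths d (S : measurableType d) :=
  g_sigma_algebraType (coord_cylinders S).

(* Universally measurable sets / maps: measurable for the completion of every
   probability measure on S. *)
Definition univ_measurable_set d (S : measurableType d) (R : realType)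
    (E : set S) : Prop :=
  forall mu : probability S R, exists B1 B2 : set S,
    [/\ measurable B1, measurable B2, B1 `<=` E, E `<=` B2 &
        mu (B2 `\` B1) = 0].

Definition univ_measurable_policy d (S : measurableType d) (R : realType)
    (U : finType) (rho : S -> U) : Prop :=
  forall u : U, univ_measurable_set R (rho @^-1` [set u]).

(* Finite-dimensional distributions of the chain controlled by rho:
   fdd Ts rho m A s = probability, starting at s, that the states at times
   0..m lie in A 0, ..., A m respectively (Ionescu-Tulcea iterated integral).*)
Fixpoint fdd d (S : measurableType d) (R : realType) (U : finType)
    (Ts : U -> R.-pker S ~> S) (rho : S -> U) (m : nat)
    (A : nat -> set S) (s : S) {struct m} : \bar R :=
  match m with
  | 0%N => (\1_(A 0%N) s)%:E
  | m'.+1 => (\1_(A 0%N) s)%:E *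
             \int[Ts (rho s) s]_y fdd Ts rho m' (fun k => A k.+1) y
  end.

Definition is_path_measure d (S : measurableType d) (R : realType)
    (U : finType) (Ts : U -> R.-pker S ~> S) (rho : S -> U)
    (P : S -> probability (paths S) R) : Prop :=
  forall (s : S) (m : nat) (A : nat -> set S),
    (forall k, measurable (A k)) ->
    P s [set w : paths S | forall k, (k <= m)%N -> w k \in A k]
      = fdd Ts rho m A s.

Definition measurable_partition d (S : measurableType d) (l : nat)
    (B : nat -> set S) : Prop :=
  [/\ forall i, (1 <= i <= l)%N -> measurable (B i),
      forall i j, (1 <= i <= l)%N -> (1 <= j <= l)%N -> i <> j ->
        B i `&` B j = set0 &
      forall x : S, exists2 i, (1 <= i <= l)%N & B i x].

Definition inf_often d (S : measurableType d) (B : set S) (w : nat -> S) :=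
  forall N, exists2 k, (N <= k)%N & B (w k).

Definition parity d (S : measurableType d) (l : nat) (B : nat -> set S) :
    set (paths S) :=
  [set w | forall i, odd i -> (1 <= i <= l)%N -> inf_often (B i) w ->
     exists j, [/\ ~~ odd j, (i + 1 <= j <= l)%N & inf_often (B j) w]].

Definition eventually_safe d (S : measurableType d) (l : nat)
    (B : nat -> set S) (i : nat) : set (paths S) :=
  [set w | exists m,
     (forall k, (m <= k)%N -> ~ B i (w k)) \/
     (exists j, [/\ ~~ odd j, (i + 1 <= j <= l)%N & B j (w m)])].

(* Fix an odd index i.  A path violates the parity condition at i exactly when,
   from some time k on, it lies in B_i at time k, visits B_i infinitely often and
   never visits an even B_j with j > i.  For k = 0 such paths are null from every
   start state: from a state of B_i the hypothesis makes the path almost surely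
   eventually safe.  Nullity is pushed from time k to time k + 1 by a Markov
   argument that only uses the finite-dimensional distributions: the event is
   approximated from above by the countable disjoint unions of cylinders "A holds
   up to the first visit to B_i after time N", whose probabilities decrease to 0
   in every start state, and the first-step integral against T(. | s, rho s)
   passes to the limit.  As rho is merely universally measurable, s |-> P_s(E)
   need not be measurable; the integrals are lower integrals (suprema over simple
   minorants), for which monotonicity, superadditivity and this limit still hold.
   Countably many null sets then cover the complement of the parity event. *)

From HB Require Import structures.
From mathcomp Require Import all_boot all_order all_algebra.
From mathcomp Require Import all_classical all_reals all_analysis.
From mathcomp Require Import measurable_realfun zify.
Set Implicit Arguments. Unset Strict Implicit. Unset Printing Implicit Defensive.
Import Order.TTheory GRing.Theory Num.Theory.
Local Open Scope classical_set_scope.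
Local Open Scope ring_scope.
Local Open Scope ereal_scope.

Lemma measure_lim_sup_set_ge d (T : measurableType d) (R : realType)
    (mu : {measure set T -> \bar R}) (F : (set T)^nat) (c : \bar R) :
  mu setT < +oo -> (forall n, measurable (F n)) -> (forall n, c <= mu (F n)) ->
  c <= mu (lim_sup_set F).
Proof.
move=> muT mF cF.
have mU n : measurable (\bigcup_(k >= n) F k).
  by apply: bigcup_measurable => k _; exact: mF.
have U0fin : mu (\bigcup_(k >= 0) F k) < +oo.
  exact: le_lt_trans (le_measure _ (mem_set (mU 0%N)) (mem_set measurableT)
    (@subsetT _ _)) muT.
have cvgU := lim_sup_set_cvg mu F mF U0fin.
rewrite -(cvg_lim _ cvgU) //; apply: lime_ge; first exact: cvgP cvgU.
apply: nearW => n; apply: le_trans (cF n) _; apply: le_measure; rewrite ?inE //.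
by move=> x Fx; exists n => /=.
Qed.

Section lower_integral.
Context d (T : measurableType d) (R : realType) (mu : {measure set T -> \bar R}).
Import HBNNSimple.

Lemma le_ge0_integralT (f g : T -> \bar R) : (forall x, 0 <= f x) ->
  (forall x, f x <= g x) -> \int[mu]_x f x <= \int[mu]_x g x.
Proof.
move=> f0 fg; have g0 x : 0 <= g x by exact: le_trans (f0 x) (fg x).
rewrite !ge0_integralTE //; apply: ereal_sup_le => _ [h hf <-]; exists h => //= x.
exact: le_trans (hf x) (fg x).
Qed.

Lemma ge0_integralT_gt_nnsfun (f : T -> \bar R) (a : \bar R) :
  (forall x, 0 <= f x) -> a < \int[mu]_x f x ->
  exists2 h : {nnsfun T >-> R},
    (forall x, (h x)%:E <= f x) & a < \int[mu]_x (h x)%:E.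
Proof.
move=> f0; rewrite ge0_integralTE // => /ereal_sup_gt [_ [h hf <-] ah].
by exists h; rewrite // integralT_nnsfun.
Qed.

Lemma measurable_nnsfun_gt (h : {nnsfun T >-> R}) (c : R) :
  measurable [set x | (c < h x)%R].
Proof.
rewrite (_ : [set x | _] = h @^-1` `]c, +oo[%classic).
  by apply: measurable_funPTI; exact: measurable_itv.
by apply/seteqP; split => x /=; rewrite in_itv /= andbT.
Qed.

Let ge0_fin_num_or_pinfty (x : \bar R) : 0 <= x -> x \is a fin_num \/ x = +oo.
Proof. by case: x => [r| |] //= _; [left | right]. Qed.

Lemma nnsfun_integralT_leD (h : {nnsfun T >-> R}) (f g : T -> \bar R) :
  (forall x, (h x)%:E <= f x) -> (forall x, 0 <= g x) ->
  \int[mu]_x (h x)%:E + \int[mu]_x g x <= \int[mu]_x (f x + g x).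
Proof.
move=> hf g0; have h0 x : 0 <= (h x)%:E by rewrite lee_fin.
have fg0 x : 0 <= f x + g x by rewrite adde_ge0 // (le_trans (h0 x)).
have := ge0_fin_num_or_pinfty (integral_ge0 mu (D := setT) (fun x _ => h0 x)).
case=> [hfin|hoo].
  rewrite -leeBrDl // [X in X <= _]ge0_integralTE //.
  apply: ge_ereal_sup => _ [h' h'g <-]; have h'0 x : 0 <= (h' x)%:E by rewrite lee_fin.
  rewrite leeBrDl // -integralT_nnsfun -(ge0_integralD mu measurableT) //; last 2 first.
  - by apply/measurable_EFinP; exact: measurable_funP.
  - by apply/measurable_EFinP; exact: measurable_funP.
  by apply: le_ge0_integralT => x; [exact: adde_ge0 | exact: leeD].
have : \int[mu]_x (h x)%:E <= \int[mu]_x (f x + g x).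
  by apply: le_ge0_integralT => // x; apply: le_trans (hf x) _; exact: leeDl.
by rewrite hoo leye_eq => /eqP ->; rewrite leey.
Qed.

Lemma ge0_integralT_leD (f g : T -> \bar R) : (forall x, 0 <= f x) ->
  (forall x, 0 <= g x) -> \int[mu]_x f x + \int[mu]_x g x <= \int[mu]_x (f x + g x).
Proof.
move=> f0 g0; have fg0 x : 0 <= f x + g x by exact: adde_ge0.
have := ge0_fin_num_or_pinfty (integral_ge0 mu (D := setT) (fun x _ => g0 x)).
case=> [gfin|goo].
  rewrite -leeBrDr // [X in X <= _]ge0_integralTE //.
  apply: ge_ereal_sup => _ [h hf <-].
  by rewrite leeBrDr // -integralT_nnsfun; exact: nnsfun_integralT_leD.
have : \int[mu]_x g x <= \int[mu]_x (f x + g x).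
  by apply: le_ge0_integralT => // x; exact: leeDr.
by rewrite goo leye_eq => /eqP ->; rewrite leey.
Qed.

Lemma ge0_sum_integralT_le (n : nat) (f : nat -> T -> \bar R) :
  (forall k x, 0 <= f k x) ->
  \sum_(0 <= k < n) \int[mu]_x f k x <= \int[mu]_x \sum_(0 <= k < n) f k x.
Proof.
move=> f0; elim: n => [|n IH].
  by rewrite big_geq //; apply: integral_ge0 => x _; exact: sume_ge0.
rewrite big_nat_recr //=.
under [X in _ <= X]eq_integral => x _ do rewrite big_nat_recr //=.
apply: le_trans (ge0_integralT_leD _ _) => //; first exact: leeD.
by move=> x; exact: sume_ge0.
Qed.

Lemma ge0_nneseries_integralT_le (f : nat -> T -> \bar R) :
  (forall k x, 0 <= f k x) ->
  \sum_(k <oo) \int[mu]_x f k x <= \int[mu]_x \sum_(k <oo) f k x.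
Proof.
move=> f0; apply: lime_le.
  by apply: is_cvg_nneseries => k _ _; exact: integral_ge0.
apply: nearW => n; apply: le_trans (ge0_sum_integralT_le _ f0) _.
apply: le_ge0_integralT => x; first exact: sume_ge0.
exact: nneseries_lim_ge.
Qed.

Lemma nnsfun_integralT_le_measure_gt (h : {nnsfun T >-> R}) (c : R) :
  (0 <= c)%R -> (forall x, h x <= 1)%R ->
  \int[mu]_x (h x)%:E <= mu [set x | (c < h x)%R] + c%:E * mu setT.
Proof.
move=> c0 h1; set E := [set x | (c < h x)%R].
have mE : measurable E by exact: measurable_nnsfun_gt.
have -> : mu E = \int[mu]_x (\1_E x)%:E by rewrite integral_indic // setIT.
rewrite -integral_cst // -ge0_integralD //; last first.
  by apply/measurable_EFinP; exact: measurable_indic.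
apply: le_ge0_integralT => [x|x]; first by rewrite lee_fin.
rewrite /= -EFinD lee_fin indicE; case: (boolP (x \in E)) => [_|/negP xE].
  by rewrite (le_trans (h1 x)) // lerDl.
by rewrite add0r leNgt; apply/negP => cx; apply: xE; rewrite inE.
Qed.

Lemma nonincreasing_integralT_vanish (f : nat -> T -> \bar R) : mu setT = 1 ->
  (forall N x, 0 <= f N x <= 1) -> (forall N x, f N.+1 x <= f N x) ->
  (forall x (e : R), (0 < e)%R -> exists N, f N x <= e%:E) ->
  forall e : R, (0 < e)%R -> exists N, \int[mu]_x f N x <= e%:E.
Proof.
(* Otherwise simple minorants h_N of f_N with integrals above e give sets
   [e/2 < h_N] of measure at least e/2, whose lim sup is nevertheless empty. *)
move=> mu1 f01 fdec fvanish e e0; apply: contrapT => /forallNP small.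
have {}small N : e%:E < \int[mu]_x f N x.
  by rewrite ltNge; apply/negP; exact: small.
have /choice [h hP] : forall N, exists h : {nnsfun T >-> R},
    (forall x, (h x)%:E <= f N x) /\ e%:E < \int[mu]_x (h x)%:E.
  move=> N; have [|h hf eh] := ge0_integralT_gt_nnsfun _ (small N).
    by move=> x; have /andP[] := f01 N x.
  by exists h.
have e2 : (0 < e / 2)%R by rewrite divr_gt0.
pose E N := [set x | (e / 2 < h N x)%R].
have mE N : measurable (E N) by exact: measurable_nnsfun_gt.
have muE N : (e / 2)%:E <= mu (E N).
  have h1 x : (h N x <= 1)%R.
    by rewrite -lee_fin (le_trans ((hP N).1 x)) //; have /andP[] := f01 N x.
  have := lt_le_trans (hP N).2 (nnsfun_integralT_le_measure_gt (ltW e2) h1).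
  by rewrite [mu setT]mu1 mule1 {1}(splitr e) EFinD lteD2rE // => /ltW.
have muT : mu setT < +oo by rewrite [mu setT]mu1 ltry.
have := measure_lim_sup_set_ge muT mE muE.
rewrite (_ : lim_sup_set E = set0) ?measure0 ?lee_fin ?leNgt ?e2 //.
apply/seteqP; split => // x Ex; have [N fN] := fvanish x _ e2.
have [m /= Nm Emx] := Ex N I.
have fmN : f m x <= f N x.
  by apply: (nonincreasing_seqP (f ^~ x)).1 => // n; exact: fdec.
have := le_trans ((hP m).1 x) (le_trans fmN fN).
by rewrite lee_fin leNgt Emx.
Qed.

End lower_integral.

Section inf_often.
Context d (S : measurableType d).
Implicit Types (X Y : set S) (w : nat -> S).

Lemma not_inf_often X w :
  ~ inf_often X w -> exists N, forall k, (N <= k)%N -> ~ X (w k).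
Proof.
move=> nio; apply: contrapT => H; apply: nio => N; apply: contrapT => H2.
by apply: H; exists N => k Nk Xk; apply: H2; exists k.
Qed.

Lemma inf_often_sub X Y w : X `<=` Y -> inf_often X w -> inf_often Y w.
Proof. by move=> XY Xio N; have [k Nk /XY Yk] := Xio N; exists k. Qed.

Lemma inf_often_setU X Y w :
  inf_often (X `|` Y) w -> inf_often X w \/ inf_often Y w.
Proof.
move=> XYio; have [Xio|/not_inf_often [N XN]] := pselect (inf_often X w).
  by left.
right => M; have [k NMk [Xk|Yk]] := XYio (maxn N M).
  by exfalso; apply: (XN k) => //; exact: leq_trans (leq_maxl _ _) NMk.
by exists k => //; exact: leq_trans (leq_maxr _ _) NMk.
Qed.

Lemma inf_often_cover (n : nat) (Q : nat -> Prop) (F : nat -> set S) Y w :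
  (forall j, Q j -> (j < n)%N) -> Y `<=` [set x | exists2 j, Q j & F j x] ->
  inf_often Y w -> exists2 j, Q j & inf_often (F j) w.
Proof.
elim: n Q Y => [|n IH] Q Y Qn YF Yio.
  by have [k _ /YF [j /Qn]] := Yio 0%N.
pose Y' := [set x | exists2 j, Q j /\ (j < n)%N & F j x].
have YU : Y `<=` Y' `|` [set x | Q n /\ F n x].
  move=> x /YF [j Qj Fj]; have := Qn j Qj; rewrite ltnS leq_eqVlt.
  by case/orP => [/eqP jn|jn]; [right; rewrite -jn | left; exists j].
case: (inf_often_setU (inf_often_sub YU Yio)) => [Y'io|Fio].
  have [j [Qj _] Fj] := IH (fun j => Q j /\ (j < n)%N) Y' (fun j => @proj2 _ _)
    (fun x => id) Y'io.
  by exists j.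
have [k _ [Qn' _]] := Fio 0%N; exists n => //.
by apply: inf_often_sub Fio => x [].
Qed.

End inf_often.

Section path_events.
Context d (S : measurableType d).
Implicit Types (A : nat -> set S) (X : set S).

Definition cylinder (m : nat) A : set (paths S) :=
  [set w | forall k, (k <= m)%N -> w k \in A k].

Definition always_in A : set (paths S) := [set w | forall k, A k (w k)].

Definition visits_io X : set (paths S) := [set w | inf_often X w].

Definition delay A : nat -> set S := fun k => if k is k'.+1 then A k' else setT.

Definition first_visit_pattern X (N t u : nat) : set S :=
  if u == (N + t)%N then X else if (N <= u < N + t)%N then ~` X else setT.

Definition until_visit X A N t : set (paths S) :=
  cylinder (N + t) (fun u => A u `&` first_visit_pattern X N t u).

(* Paths that visit [X] at some time [>= N] and satisfy [A] up to the first
   such visit. *)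
Definition until_first_visit X A N : set (paths S) :=
  \bigcup_t until_visit X A N t.

Lemma iter_delay A k u :
  iter k delay A u = if (u < k)%N then setT else A (u - k)%N.
Proof.
elim: k u => [|k IH] u /=; first by rewrite subn0.
by case: u => [|u] //=; rewrite IH ltnS subSS.
Qed.

Lemma measurable_coord k X : measurable X ->
  measurable [set w : paths S | X (w k)].
Proof. by move=> mX; apply: sub_gen_smallest; exists k, X. Qed.

Lemma measurable_cylinder m A : (forall k, measurable (A k)) ->
  measurable (cylinder m A).
Proof.
move=> mA; rewrite (_ : cylinder m A =
    \bigcap_(k in [set k | (k <= m)%N]) [set w | A k (w k)]); last first.
  by apply/seteqP; split => w /= Aw k km; [rewrite -inE | rewrite inE]; exact: Aw.
by apply: bigcap_measurable; [exists 0%N | move=> k _; exact: measurable_coord].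
Qed.

Lemma measurable_always_in A : (forall k, measurable (A k)) ->
  measurable (always_in A).
Proof.
move=> mA; rewrite (_ : always_in A = \bigcap_k [set w | A k (w k)]).
  by apply: bigcapT_measurable => k; exact: measurable_coord.
by apply/seteqP; split => [w Aw k _ | w Aw k]; [exact: Aw | exact: Aw k I].
Qed.

Lemma measurable_visits_io X : measurable X -> measurable (visits_io X).
Proof.
move=> mX; rewrite (_ : visits_io X =
    \bigcap_N \bigcup_(k in [set k | (N <= k)%N]) [set w | X (w k)]).
  apply: bigcapT_measurable => N; apply: bigcup_measurable => k _.
  exact: measurable_coord.
apply/seteqP; split => w /= Xio N; first by move=> _; have [k] := Xio N; exists k.
by have [k] := Xio N I; exists k.
Qed.

Lemma measurable_delay A : (forall k, measurable (A k)) ->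
  forall k, measurable (delay A k).
Proof. by move=> mA [|k] /=; [exact: measurableT | exact: mA]. Qed.

Lemma measurable_iter_delay A k : (forall u, measurable (A u)) ->
  forall u, measurable (iter k delay A u).
Proof. by move=> mA u; rewrite iter_delay; case: ifP. Qed.

Lemma measurable_first_visit_pattern X N t u : measurable X ->
  measurable (first_visit_pattern X N t u).
Proof.
move=> mX; rewrite /first_visit_pattern.
by case: ifP => // _; case: ifP => // _; exact: measurableC.
Qed.

Lemma measurable_until_first_visit X A N : measurable X ->
  (forall k, measurable (A k)) -> measurable (until_first_visit X A N).
Proof.
move=> mX mA; apply: bigcupT_measurable => t; apply: measurable_cylinder => u.
exact: measurableI (mA u) (measurable_first_visit_pattern _ _ _ mX).
Qed.

Lemma until_first_visit_nonincreasing X A N :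
  until_first_visit X A N.+1 `<=` until_first_visit X A N.
Proof.
move=> w [t _ wt].
have {}wt u : (u <= N.+1 + t)%N ->
    A u (w u) /\ first_visit_pattern X N.+1 t u (w u).
  by move=> ut; have := wt u ut; rewrite inE.
(* The first visit to [X] from time [N] is at [N] itself, or else it is the
   first visit from time [N + 1]. *)
have [XN|nXN] := pselect (X (w N)).
  exists 0%N => // u; rewrite addn0 inE /first_visit_pattern addn0 => uN.
  split; first by apply: (wt u _).1; lia.
  by have [->|uN'] := eqVneq u N => //; rewrite ifF //; lia.
exists t.+1 => // u ut; rewrite inE; split; first by apply: (wt u _).1; lia.
rewrite /first_visit_pattern; have [->|uN] := eqVneq u N.
  by rewrite ifF ?ifT //; lia.
have := (wt u _).2; rewrite /first_visit_pattern addSnnS => /(_ ut).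
case: ifP => // _; rewrite (_ : (N.+1 <= u) = (N <= u))%N //.
by apply/idP/idP; lia.
Qed.

Lemma bigcap_until_first_visit X A :
  \bigcap_N until_first_visit X A N `<=` always_in A `&` visits_io X.
Proof.
move=> w wU; split.
  by move=> k; have [t _ /(_ k (leq_addr _ _))] := wU k I; rewrite inE => -[].
move=> N; have [t _ /(_ (N + t)%N (leqnn _))] := wU N I.
rewrite inE /first_visit_pattern eqxx => -[_ Xw].
by exists (N + t)%N => //; exact: leq_addr.
Qed.

Lemma trivIset_until_visit X A N : trivIset setT (until_visit X A N).
Proof.
suff visit_lt t1 t2 w : (t1 < t2)%N ->
    until_visit X A N t1 w -> until_visit X A N t2 w -> False.
  move=> t1 t2 _ _ [w [w1 w2]]; apply/eqP; apply: contrapT => /negP.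
  by rewrite neq_ltn => /orP [] t12; [exact: visit_lt w1 w2 | exact: visit_lt w2 w1].
move=> t12 w1 w2.
have := w1 (N + t1)%N (leqnn _); rewrite inE /first_visit_pattern eqxx => -[_ Xw].
have := w2 (N + t1)%N (ltac:(lia)); rewrite inE /first_visit_pattern.
by rewrite ifF ?ifT; [move=> [_ /(_ Xw)] | lia | lia].
Qed.

Lemma always_in_delay_cover X A N :
  always_in (delay A) `&` visits_io X `<=`
  \bigcup_t cylinder (N + t).+1 (delay (fun u => A u `&` first_visit_pattern X N t u)).
Proof.
move=> w [Aw Xio].
have ex : exists k, (N < k)%N && `[< X (w k) >].
  by have [k Nk Xk] := Xio N.+1; exists k; rewrite Nk; exact/asboolP.
case: (ex_minnP ex) => k /andP [Nk /asboolP Xk] kmin.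
exists (k - N.+1)%N => // -[|u] uk; rewrite inE //=; split; first exact: (Aw u.+1).
rewrite /first_visit_pattern; have [uE|uE] := eqVneq u (N + (k - N.+1))%N.
  by rewrite (_ : u.+1 = k) //; lia.
case: ifP => // /andP [Nu uk'] Xu.
have /kmin : (N < u.+1)%N && `[< X (w u.+1) >] by rewrite ltnS Nu; exact/asboolP.
lia.
Qed.

End path_events.

Section markov.
Context d (S : measurableType d) (R : realType) (U : finType)
  (Ts : U -> R.-pker S ~> S) (rho : S -> U) (P : S -> probability (paths S) R).
Hypothesis HP : is_path_measure Ts rho P.

Lemma path_measure_cylinder_delay A m s : (forall k, measurable (A k)) ->
  P s (cylinder m.+1 (delay A)) = \int[Ts (rho s) s]_y P y (cylinder m A).
Proof.
move=> mA; rewrite [LHS]HP; last exact: measurable_delay.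
rewrite /= indicE mem_set // mul1e; apply: eq_integral => y _.
by rewrite [RHS]HP.
Qed.

Lemma path_measure_always_in_delay_le X A N s : measurable X ->
  (forall k, measurable (A k)) ->
  P s (always_in (delay A) `&` visits_io X) <=
  \int[Ts (rho s) s]_y P y (until_first_visit X A N).
Proof.
move=> mX mA.
have mAX t k : measurable (A k `&` first_visit_pattern X N t k).
  exact: measurableI (mA k) (measurable_first_visit_pattern _ _ _ mX).
have mXA : measurable (always_in (delay A) `&` visits_io X).
  exact: measurableI (measurable_always_in (measurable_delay mA))
    (measurable_visits_io mX).
(* Split at the first visit to [X] after time [N + 1], then condition on the
   first step. *)
apply: le_trans (measure_sigma_subadditive _
  (fun t => measurable_cylinder _ (measurable_delay (mAX t))) mXA
  (always_in_delay_cover N)) _.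
rewrite (eq_eseriesr (fun t _ => path_measure_cylinder_delay (N + t) s (mAX t))).
apply: le_trans (ge0_nneseries_integralT_le _ _) _ => //.
apply: le_ge0_integralT => y; first exact: nneseries_ge0.
have mUt t : measurable (until_visit X A N t) by exact: measurable_cylinder.
rewrite measure_semi_bigcup //; first exact: trivIset_until_visit.
exact: measurable_until_first_visit.
Qed.

Lemma path_measure_until_first_visit_vanish X A y (e : R) : measurable X ->
  (forall k, measurable (A k)) -> P y (always_in A `&` visits_io X) = 0 ->
  (0 < e)%R -> exists N, P y (until_first_visit X A N) <= e%:E.
Proof.
move=> mX mA null e0; apply: contrapT => /forallNP large.
have {}large N : e%:E < P y (until_first_visit X A N).
  by rewrite ltNge; apply/negP; exact: large.
have mU N := measurable_until_first_visit N mX mA.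
have mcap : measurable (\bigcap_N until_first_visit X A N).
  exact: bigcapT_measurable.
have cvgU : (fun N => P y (until_first_visit X A N)) @ \oo -->
    P y (\bigcap_N until_first_visit X A N).
  apply: nonincreasing_cvg_mu => //.
    by apply: le_lt_trans (probability_le1 _ (mU 0%N)) _; exact: ltry.
  apply/nonincreasing_seqP => N; apply/subsetPset.
  exact: until_first_visit_nonincreasing.
have ge_e : e%:E <= P y (\bigcap_N until_first_visit X A N).
  rewrite -(cvg_lim _ cvgU) //; apply: lime_ge; first exact: cvgP cvgU.
  by apply: nearW => N; exact: ltW.
have mXA : measurable (always_in A `&` visits_io X).
  exact: measurableI (measurable_always_in mA) (measurable_visits_io mX).
have le0 : P y (\bigcap_N until_first_visit X A N) <= 0.
  rewrite -null; apply: le_measure; rewrite ?inE //.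
  exact: bigcap_until_first_visit.
by have := le_trans ge_e le0; rewrite lee_fin leNgt e0.
Qed.

Lemma path_measure_always_in_delay_null X A : measurable X ->
  (forall k, measurable (A k)) ->
  (forall y, P y (always_in A `&` visits_io X) = 0) ->
  forall s, P s (always_in (delay A) `&` visits_io X) = 0.
Proof.
move=> mX mA null s; apply/eqP; rewrite -measure_le0; apply/lee_addgt0Pr => e e0.
have mU N := measurable_until_first_visit N mX mA.
pose f N y := P y (until_first_visit X A N).
have mu1 : Ts (rho s) s setT = 1 by exact: prob_kernel.
have f01 N y : 0 <= f N y <= 1 by rewrite measure_ge0 probability_le1.
have fdec N y : f N.+1 y <= f N y.
  by apply: le_measure; rewrite ?inE //; exact: until_first_visit_nonincreasing.
have fvanish y e' : (0 < e')%R -> exists N, f N y <= e'%:E.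
  exact: path_measure_until_first_visit_vanish.
have [N small] := nonincreasing_integralT_vanish mu1 f01 fdec fvanish e0.
by rewrite add0e (le_trans (path_measure_always_in_delay_le N s mX mA)).
Qed.

Lemma path_measure_always_in_iter_delay_null X A k : measurable X ->
  (forall u, measurable (A u)) ->
  (forall y, P y (always_in A `&` visits_io X) = 0) ->
  forall s, P s (always_in (iter k (@delay _ S) A) `&` visits_io X) = 0.
Proof.
move=> mX mA null; elim: k => [//|k IH].
by apply: path_measure_always_in_delay_null => //; exact: measurable_iter_delay.
Qed.

End markov.

Section parity.
Context d (S : measurableType d) (l : nat) (B : nat -> set S).
Hypothesis mB : forall i, (1 <= i <= l)%N -> measurable (B i).

Definition even_above (i : nat) : set S :=
  [set x | exists j, [/\ ~~ odd j, (i + 1 <= j <= l)%N & B j x]].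

Definition avoid_even_above (i : nat) : nat -> set S :=
  fun u => if u == 0%N then B i `&` ~` even_above i else ~` even_above i.

(* Paths that are in [B i] at time [k], visit [B i] infinitely often, and never
   visit a higher even-indexed set from time [k] on. *)
Definition odd_trap (i k : nat) : set (paths S) :=
  always_in (iter k (@delay _ S) (avoid_even_above i)) `&` visits_io (B i).

Lemma setC_parity : ~` parity l B =
  \bigcup_(i in [set i | odd i /\ (1 <= i <= l)%N]) \bigcup_k odd_trap i k.
Proof.
apply/seteqP; split => w; last first.
  move=> [i /= [oi il] [k _ [trap Bio]]] par.
  have [j [ej jr Bjio]] := par i oi il Bio; have [t kt Bjt] := Bjio k.
  have := trap t; rewrite iter_delay ltnNge kt /= /avoid_even_above.
  by case: ifP => _ => [[_]|]; apply; exists j.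
move=> npar; apply: contrapT => ntrap; apply: npar => i oi il Bio.
apply: contrapT => noeven.
have [N free] : exists N, forall k, (N <= k)%N -> ~ even_above i (w k).
  apply: not_inf_often => Hio.
  have bound j : ~~ odd j /\ (i + 1 <= j <= l)%N -> (j < l.+1)%N.
    by move=> [_ /andP [_]]; rewrite ltnS.
  have covered : even_above i `<=`
      [set x | exists2 j, ~~ odd j /\ (i + 1 <= j <= l)%N & B j x].
    by move=> x [j [ej jr Bj]]; exists j.
  have [j [ej jr] Bjio] := inf_often_cover bound covered Hio.
  by apply: noeven; exists j.
have [k Nk Bk] := Bio N.
apply: ntrap; exists i => //; exists k => //; split => // u.
rewrite iter_delay /avoid_even_above; case: ltnP => // ku.
have nH : ~ even_above i (w u) by apply: free; exact: leq_trans Nk ku.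
case: ifP => [/eqP ukE|_] //.
have uk : u = k by lia.
by subst u; split.
Qed.

Lemma measurable_even_above i : measurable (even_above i).
Proof.
rewrite (_ : even_above i =
    \bigcup_(j in [set j | ~~ odd j /\ (i + 1 <= j <= l)%N]) B j); last first.
  by apply/seteqP; split => [x [j [ej jr Bj]] | x [j /= [ej jr] Bj]]; exists j.
apply: bigcup_measurable => j [_ /andP [ij jl]]; apply: mB.
by rewrite jl andbT (leq_trans (leq_addl i 1) ij).
Qed.

Lemma measurable_avoid_even_above i : (1 <= i <= l)%N ->
  forall u, measurable (avoid_even_above i u).
Proof.
move=> il u; have mC := measurableC (measurable_even_above i).
by rewrite /avoid_even_above; case: ifP => // _; exact: measurableI (mB il) mC.
Qed.

Lemma measurable_odd_trap i k : (1 <= i <= l)%N -> measurable (odd_trap i k).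
Proof.
move=> il; apply: measurableI; last exact: measurable_visits_io (mB il).
apply: measurable_always_in.
exact: measurable_iter_delay (measurable_avoid_even_above il).
Qed.

Lemma measurable_eventually_safe i : (1 <= i <= l)%N ->
  measurable (eventually_safe l B i).
Proof.
move=> il; rewrite (_ : eventually_safe l B i = \bigcup_m
    ((\bigcap_(k in [set k | (m <= k)%N]) [set w : paths S | (~` B i) (w k)]) `|`
     [set w : paths S | even_above i (w m)])); last first.
  by apply/seteqP; split=> [w [m Hm] | w [m _ Hm]]; exists m.
apply: bigcupT_measurable => m; apply: measurableU.
  apply: bigcap_measurable => [|k _]; first by exists m => /=.
  exact: measurable_coord (measurableC (mB il)).
exact: measurable_coord (measurable_even_above i).
Qed.

Section path_measure.
Context (R : realType) (U : finType) (Ts : U -> R.-pker S ~> S) (rho : S -> U)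
  (P : S -> probability (paths S) R).
Hypothesis HP : is_path_measure Ts rho P.
Hypothesis safe : forall i, odd i -> (1 <= i <= l)%N ->
  forall x, B i x -> P x (eventually_safe l B i) = 1.

Lemma odd_trap0_null i y : odd i -> (1 <= i <= l)%N -> P y (odd_trap i 0) = 0.
Proof.
move=> oi il; apply: measure_negligible; first exact: measurable_odd_trap.
have [Bi|nBi] := pselect (B i y).
  have mES := measurable_eventually_safe il.
  have unsafe0 : P y (~` eventually_safe l B i) = 0.
    by rewrite probability_setC // (safe oi il Bi) subee.
  exists (~` eventually_safe l B i); split => //; first exact: measurableC.
  move=> w [trap Bio] /= [m [never|even]].
    by have [k mk Bk] := Bio m; exact: never k mk Bk.
  have := trap m; rewrite /= /avoid_even_above.
  by case: ifP => _ => [[_]|]; apply.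
have cyl0 : P y (cylinder 0 (fun _ => B i)) = 0.
  by have := HP y 0%N (fun _ => mB il); rewrite /= indicE memNset.
exists (cylinder 0 (fun _ => B i)); split => //.
  by apply: measurable_cylinder => _; exact: mB.
move=> w [trap _] k; rewrite leqn0 => /eqP ->; rewrite inE.
by have [] := trap 0%N.
Qed.

Lemma odd_trap_null i k s : odd i -> (1 <= i <= l)%N -> P s (odd_trap i k) = 0.
Proof.
move=> oi il; apply: (path_measure_always_in_iter_delay_null HP).
- exact: mB.
- exact: measurable_avoid_even_above.
- by move=> y; exact: odd_trap0_null.
Qed.

Lemma path_measure_parity s : P s (parity l B) = 1.
Proof.
pose traps := \bigcup_(i in [set i | odd i /\ (1 <= i <= l)%N]) \bigcup_k odd_trap i k.
have mtraps : measurable traps.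
  apply: bigcup_measurable => i [_ il]; apply: bigcupT_measurable => k.
  exact: measurable_odd_trap.
have traps0 : P s traps = 0.
  apply: measure_negligible => //; rewrite /traps bigcup_mkcond.
  apply: negligible_bigcup => i; case: ifPn => [/set_mem [oi il] | _].
    apply: negligible_bigcup => k; apply/negligibleP; first exact: measurable_odd_trap.
    exact: odd_trap_null.
  exact: negligible_set0.
by rewrite -(setCK (parity l B)) setC_parity probability_setC // traps0 sube0.
Qed.

End path_measure.
End parity.

Unset Implicit Arguments.

Theorem lemma2 (d : measure_display) (S : measurableType d) (R : realType)
    (U : finType) (Ts : U -> R.-pker S ~> S) (l : nat) (B : nat -> set S)
    (s0 : S) (rho : S -> U) (P : S -> probability (paths S) R) :
  measurable_partition l B ->
  univ_measurable_policy R rho ->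
  is_path_measure Ts rho P ->
  (forall (n : nat) (p : 'I_n.+1 -> S), p ord0 = s0 ->
     forall i : nat, odd i -> (1 <= i <= l)%N ->
       B i (p ord_max) -> P (p ord_max) (eventually_safe l B i) = 1) ->
  P s0 (parity l B) = 1.
Proof.
move=> [mB _ _] _ HP safe; apply: (path_measure_parity mB HP) => i oi il x Bx.
(* Finite paths are arbitrary state sequences, so [s0; x] is one for any x. *)
exact: (safe 1%N (fun k : 'I_2 => if val k == 0%N then s0 else x) erefl i oi il Bx).
Qed.
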